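(* Let $(X,d)$ be a complete metric space, $N\geq1$, $\{A_{1},\ldots,A_{N}\}$ a family of nonempty closed subsets of $X$, and $T:X\rightarrow X$. Set $A_{N+1}:=A_{1}$. Suppose: (F1) $T(A_{i})\subseteq A_{i+1}$ for all $i\in\{1,\dots,N\}$; (F3) for every $\varepsilon>0$ there exists $\delta(\varepsilon)>0$ such that for all $i\in\{1,\ldots,N\}$, $x\in A_{i}$, $y\in A_{i+1}$: $\varepsilon\leq d(x,y)<\varepsilon+\delta(\varepsilon)$ implies $d(Tx,Ty)<\varepsilon$. Then $\bigcap_{i=1}^{N}A_{i}$ is nonempty and $T$ has a fixed point $x^{\ast}\in\bigcap_{i=1}^{N}A_{i}$. Moreover, $x^{\ast}$ is the unique fixed point of $T$ in $\bigcup_{i=1}^{N}A_{i}$, and $T^{n}x\rightarrow x^{\ast}$ as $n\rightarrow\infty$ for all $x\in\bigcup_{i=1}^{N}A_{i}$. *)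

From Stdlib Require Import Reals Lra Lia.
Open Scope R_scope.

Definition is_metric {X : Type} (d : X -> X -> R) : Prop :=
  (forall x y, 0 <= d x y) /\
  (forall x y, d x y = 0 <-> x = y) /\
  (forall x y, d x y = d y x) /\
  (forall x y z, d x z <= d x y + d y z).

Definition cauchy_seq {X : Type} (d : X -> X -> R) (u : nat -> X) : Prop :=
  forall eps, 0 < eps -> exists N, forall m n, (N <= m)%nat -> (N <= n)%nat ->
    d (u m) (u n) < eps.

Definition seq_converges_to {X : Type} (d : X -> X -> R) (u : nat -> X) (l : X) : Prop :=
  forall eps, 0 < eps -> exists N, forall n, (N <= n)%nat -> d (u n) l < eps.

Definition complete_metric {X : Type} (d : X -> X -> R) : Prop :=
  forall u : nat -> X, cauchy_seq d u -> exists l, seq_converges_to d u l.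

Definition metric_open {X : Type} (d : X -> X -> R) (U : X -> Prop) : Prop :=
  forall x, U x -> exists r, 0 < r /\ forall y, d x y < r -> U y.

Definition metric_closed {X : Type} (d : X -> X -> R) (F : X -> Prop) : Prop :=
  metric_open d (fun x => ~ F x).

Fixpoint iter_map {X : Type} (T : X -> X) (n : nat) (x : X) : X :=
  match n with O => x | S k => T (iter_map T k x) end.

(* Reindex the family periodically, B i := A (i mod N), so that T maps B i into
   B (S i) and the Meir-Keeler condition compares consecutive sets.  Then T does
   not increase distances between consecutive sets, so the steps
   d (T^n x) (T^(n+1) x) of an orbit decrease, and the Meir-Keeler condition
   forces them to 0.  The orbit is Cauchy by the Meir-Keeler ball argument run
   over a full period of N steps; its limit lies in every closed B i, is fixed
   by T, is the only fixed point in the union, and attracts every orbit, since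
   d (T^n x) x* is again a nonincreasing sequence obeying the Meir-Keeler
   condition. *)

From Stdlib Require Import Reals Lra Lia Classical.
Open Scope R_scope.

Lemma meir_keeler_seq_vanishes (e : nat -> R) :
  (forall n, 0 <= e n) -> Un_decreasing e ->
  (forall eps, 0 < eps -> exists delta, 0 < delta /\
     forall n, eps <= e n -> e n < eps + delta -> e (S n) < eps) ->
  forall eps, 0 < eps -> exists M, forall n, (M <= n)%nat -> e n < eps.
Proof.
  intros e_ge0 e_decr e_mk.
  destruct (decreasing_cv e e_decr) as [L e_cvL].
  { exists 0; intros _ [n ->]; unfold opp_seq; specialize (e_ge0 n); lra. }
  pose proof (decreasing_ineq e L e_decr e_cvL) as L_le_e.
  assert (near_L : forall eps, 0 < eps -> exists n, e n < L + eps).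
  { intros eps eps_gt0; destruct (e_cvL eps eps_gt0) as [n Hn].
    exists n; specialize (Hn n (le_n n)); unfold Rdist in Hn.
    apply Rabs_def2 in Hn; lra. }
  (* A positive limit L is impossible: once e n < L + delta(L), e (S n) < L. *)
  assert (L_eq0 : L = 0).
  { destruct (Rtotal_order L 0) as [L_lt0 | [L_eq0 | L_gt0]]; [| exact L_eq0 |].
    - destruct (near_L (- L)) as [n Hn]; [lra|].
      specialize (e_ge0 n); lra.
    - destruct (e_mk L L_gt0) as [delta [delta_gt0 Hdelta]].
      destruct (near_L delta delta_gt0) as [n Hn].
      specialize (Hdelta n (L_le_e n) Hn); specialize (L_le_e (S n)); lra. }
  subst L; intros eps eps_gt0.
  destruct (e_cvL eps eps_gt0) as [M HM]; exists M; intros n Hn.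
  specialize (HM n Hn); unfold Rdist in HM; apply Rabs_def2 in HM; lra.
Qed.

Lemma succ_mod_idemp N i : (S (i mod N) mod N = S i mod N)%nat.
Proof.
  replace (S (i mod N)) with (i mod N + 1)%nat by lia.
  replace (S i) with (i + 1)%nat by lia; apply Nat.Div0.add_mod_idemp_l.
Qed.

Lemma iter_map_Sr {X : Type} (T : X -> X) n x :
  iter_map T n (T x) = iter_map T (S n) x.
Proof. induction n as [|n IHn]; simpl; [reflexivity | rewrite IHn; reflexivity]. Qed.

Lemma iter_map_add {X : Type} (T : X -> X) a b x :
  iter_map T a (iter_map T b x) = iter_map T (a + b) x.
Proof. induction a as [|a IHa]; simpl; [reflexivity | rewrite IHa; reflexivity]. Qed.

Lemma metric_closed_limit {X : Type} (d : X -> X -> R) (F : X -> Prop)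
  (u : nat -> X) (l : X) :
  (forall x y, d x y = d y x) -> metric_closed d F ->
  seq_converges_to d u l -> (forall K, exists n, (K <= n)%nat /\ F (u n)) -> F l.
Proof.
  intros d_sym F_closed u_cv F_often; apply NNPP; intro l_notin.
  destruct (F_closed l l_notin) as [r [r_gt0 ball_out]].
  destruct (u_cv r r_gt0) as [K HK].
  destruct (F_often K) as [n [Kn u_in]].
  apply (ball_out (u n)); [rewrite d_sym; apply HK, Kn | exact u_in].
Qed.

Section CyclicMeirKeeler.

Variables (X : Type) (d : X -> X -> R) (T : X -> X) (B : nat -> X -> Prop) (N : nat).

Hypothesis d_metric : is_metric d.
Hypothesis N_ge1 : (1 <= N)%nat.
Hypothesis B_periodic : forall i x, B (i + N) x -> B i x.
Hypothesis T_maps : forall i x, B i x -> B (S i) (T x).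
Hypothesis T_meir_keeler : forall eps, 0 < eps -> exists delta, 0 < delta /\
  forall i x y, B i x -> B (S i) y ->
    eps <= d x y -> d x y < eps + delta -> d (T x) (T y) < eps.

Lemma d_ge0 x y : 0 <= d x y.  Proof. apply d_metric. Qed.
Lemma d_eq0 x y : d x y = 0 <-> x = y.  Proof. apply d_metric. Qed.
Lemma d_sym x y : d x y = d y x.  Proof. apply d_metric. Qed.
Lemma d_triangle x y z : d x z <= d x y + d y z.  Proof. apply d_metric. Qed.

Lemma d_refl x : d x x = 0.
Proof. apply d_eq0; reflexivity. Qed.

Lemma iter_map_family i x n : B i x -> B (i + n) (iter_map T n x).
Proof.
  intro x_in; induction n as [|n IHn]; simpl.
  - rewrite Nat.add_0_r; exact x_in.
  - rewrite Nat.add_succ_r; apply T_maps, IHn.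
Qed.

Lemma dist_T_lt i x y : B i x -> B (S i) y -> x <> y -> d (T x) (T y) < d x y.
Proof.
  intros x_in y_in x_neq_y.
  assert (dxy_gt0 : 0 < d x y).
  { destruct (d_ge0 x y) as [? | dxy_eq0]; [assumption|].
    symmetry in dxy_eq0; apply d_eq0 in dxy_eq0; contradiction. }
  destruct (T_meir_keeler (d x y) dxy_gt0) as [delta [delta_gt0 Hdelta]].
  apply (Hdelta i); auto; lra.
Qed.

Lemma dist_T_le i x y : B i x -> B (S i) y -> d (T x) (T y) <= d x y.
Proof.
  intros x_in y_in; destruct (classic (x = y)) as [<- | x_neq_y].
  - rewrite !d_refl; lra.
  - left; apply (dist_T_lt i); assumption.
Qed.

Lemma dist_iter_le i x y n :
  B i x -> B (S i) y -> d (iter_map T n x) (iter_map T n y) <= d x y.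
Proof.
  intros x_in y_in; induction n as [|n IHn]; simpl; [lra|].
  eapply Rle_trans; [apply (dist_T_le (i + n)) | exact IHn].
  - apply iter_map_family, x_in.
  - apply (iter_map_family (S i)), y_in.
Qed.

(* Nonexpansiveness removes the lower bound [eps <= d x y] of the hypothesis. *)
Lemma T_meir_keeler_lt eps : 0 < eps -> exists delta, 0 < delta /\
  forall i x y, B i x -> B (S i) y -> d x y < eps + delta -> d (T x) (T y) < eps.
Proof.
  intro eps_gt0; destruct (T_meir_keeler eps eps_gt0) as [delta [delta_gt0 Hdelta]].
  exists delta; split; [exact delta_gt0|]; intros i x y x_in y_in dxy_lt.
  destruct (Rle_lt_dec eps (d x y)) as [eps_le | dxy_lt_eps].
  - apply (Hdelta i); assumption.
  - pose proof (dist_T_le i x y x_in y_in); lra.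
Qed.

Lemma orbit_step_le i x a b : B i x -> (a <= b)%nat ->
  d (iter_map T b x) (iter_map T (S b) x) <= d (iter_map T a x) (iter_map T (S a) x).
Proof.
  intros x_in a_le_b; replace b with ((b - a) + a)%nat by lia.
  rewrite <- (iter_map_add T (b - a) a), <- Nat.add_succ_r, <- (iter_map_add T (b - a) (S a)).
  apply (dist_iter_le (i + a)); [apply iter_map_family | simpl; apply T_maps, iter_map_family];
    exact x_in.
Qed.

Lemma orbit_step_vanishes i x : B i x -> forall eps, 0 < eps ->
  exists M, forall n, (M <= n)%nat -> d (iter_map T n x) (iter_map T (S n) x) < eps.
Proof.
  intro x_in; apply meir_keeler_seq_vanishes.
  - intro; apply d_ge0.
  - intro n; apply (orbit_step_le i); [exact x_in | lia].
  - intros eps eps_gt0; destruct (T_meir_keeler eps eps_gt0) as [delta [delta_gt0 Hdelta]].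
    exists delta; split; [exact delta_gt0|]; intros n.
    apply (Hdelta (i + n)%nat); [| simpl; apply T_maps]; apply iter_map_family, x_in.
Qed.

Lemma dist_orbit_le_steps i x a r : B i x ->
  d (iter_map T a x) (iter_map T (a + r) x) <= INR r * d x (T x).
Proof.
  intro x_in; induction r as [|r IHr].
  - rewrite Nat.add_0_r, d_refl; simpl; lra.
  - rewrite Nat.add_succ_r, S_INR.
    pose proof (orbit_step_le i x 0 (a + r) x_in ltac:(lia)); simpl in *.
    pose proof (d_triangle (iter_map T a x) (iter_map T (a + r) x) (T (iter_map T (a + r) x))).
    lra.
Qed.


Lemma iter_period_stays_in_ball eps delta i x y :
  (forall j u v, B j u -> B (S j) v -> d u v < eps + delta -> d (T u) (T v) < eps) ->
  B i x -> d x (iter_map T N x) < delta / 2 ->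
  B (S i) y -> d x y < eps + delta / 2 ->
  B (S i) (iter_map T N y) /\ d x (iter_map T N y) < eps + delta / 2.
Proof.
  intros Hdelta x_in dx_small y_in dxy_lt.
  split.
  - apply B_periodic, iter_map_family, y_in.
  - assert (period_Sr : forall z, iter_map T N z = iter_map T (N - 1) (T z)).
    { intro z; rewrite iter_map_Sr; f_equal; lia. }
    assert (dT_lt : d (T x) (T y) < eps).
    { apply (Hdelta i); [exact x_in | exact y_in |].
      pose proof (d_ge0 x (iter_map T N x)); lra. }
    pose proof (dist_iter_le (S i) (T x) (T y) (N - 1) (T_maps i x x_in) (T_maps _ y y_in)).
    pose proof (d_triangle x (iter_map T N x) (iter_map T N y)).
    rewrite !period_Sr in *; lra.
Qed.

Lemma orbit_stays_in_ball eps delta i x :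
  0 < eps ->
  (forall j u v, B j u -> B (S j) v -> d u v < eps + delta -> d (T u) (T v) < eps) ->
  B i x -> INR N * d x (T x) < delta / 2 ->
  forall k, d x (iter_map T (S (k * N)) x) < eps + delta / 2.
Proof.
  intros eps_gt0 Hdelta x_in step_small.
  assert (period_small : d x (iter_map T N x) < delta / 2).
  { pose proof (dist_orbit_le_steps i x 0 N x_in); simpl in *; lra. }
  assert (invariant : forall k, B (S i) (iter_map T (S (k * N)) x) /\
                                d x (iter_map T (S (k * N)) x) < eps + delta / 2).
  { induction k as [|k [orbit_in orbit_near]]; simpl.
    - split; [apply T_maps, x_in|].
      assert (1 <= INR N) by (apply (le_INR 1); exact N_ge1).
      pose proof (d_ge0 x (T x)); nra.
    - replace (T (iter_map T (N + k * N) x)) with (iter_map T N (iter_map T (S (k * N)) x)).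
      + apply (iter_period_stays_in_ball eps delta i); assumption.
      + rewrite iter_map_add, Nat.add_succ_r; reflexivity. }
  intro k; apply invariant.
Qed.

Lemma orbit_tail_bound eps delta i x :
  0 < eps ->
  (forall j u v, B j u -> B (S j) v -> d u v < eps + delta -> d (T u) (T v) < eps) ->
  B i x -> INR N * d x (T x) < delta / 2 ->
  forall n, d x (iter_map T n x) < eps + delta.
Proof.
  intros eps_gt0 Hdelta x_in step_small n.
  assert (delta_gt0 : 0 < delta).
  { pose proof (pos_INR N); pose proof (d_ge0 x (T x)); nra. }
  destruct n as [|a]; [simpl; rewrite d_refl; lra|].
  pose proof (Nat.div_mod a N ltac:(lia)) as a_eq.
  pose proof (Nat.mod_upper_bound a N ltac:(lia)) as r_lt.
  set (q := (a / N)%nat) in *; set (r := (a mod N)%nat) in *.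
  replace (S a) with (S (q * N) + r)%nat by lia.
  pose proof (orbit_stays_in_ball eps delta i x eps_gt0 Hdelta x_in step_small q).
  pose proof (dist_orbit_le_steps i x (S (q * N)) r x_in).
  pose proof (d_triangle x (iter_map T (S (q * N)) x) (iter_map T (S (q * N) + r) x)).
  assert (INR r * d x (T x) <= INR N * d x (T x)).
  { apply Rmult_le_compat_r; [apply d_ge0 | apply le_INR; lia]. }
  lra.
Qed.

Lemma orbit_cauchy i x : B i x -> cauchy_seq d (fun n => iter_map T n x).
Proof.
  intros x_in eps4 eps4_gt0.
  set (eps := eps4 / 4).
  destruct (T_meir_keeler_lt eps ltac:(unfold eps; lra)) as [delta0 [delta0_gt0 Hdelta0]].
  set (delta := Rmin delta0 eps).
  assert (delta_gt0 : 0 < delta) by (apply Rmin_glb_lt; unfold eps; lra).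
  assert (Hdelta : forall j u v, B j u -> B (S j) v -> d u v < eps + delta ->
                                 d (T u) (T v) < eps).
  { intros j u v u_in v_in duv_lt; apply (Hdelta0 j); [exact u_in | exact v_in |].
    pose proof (Rmin_l delta0 eps : delta <= delta0); lra. }
  assert (N_pos : 0 < INR N) by (apply lt_0_INR; lia).
  destruct (orbit_step_vanishes i x x_in (delta / (2 * INR N))) as [m Hm].
  { apply Rdiv_lt_0_compat; lra. }
  set (xm := iter_map T m x).
  assert (step_small : INR N * d xm (T xm) < delta / 2).
  { specialize (Hm m (le_n m)); simpl in Hm; fold xm in Hm.
    replace (delta / 2) with (INR N * (delta / (2 * INR N))) by (field; lra).
    apply Rmult_lt_compat_l; assumption. }
  assert (tail : forall n, (m <= n)%nat -> d xm (iter_map T n x) < eps + delta).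
  { intros n m_le_n; replace n with ((n - m) + m)%nat by lia.
    rewrite <- iter_map_add.
    apply (orbit_tail_bound eps delta (i + m)); try assumption.
    - unfold eps; lra.
    - apply iter_map_family, x_in. }
  exists m; intros p q m_le_p m_le_q.
  pose proof (tail p m_le_p); pose proof (tail q m_le_q).
  pose proof (d_triangle (iter_map T p x) xm (iter_map T q x)).
  pose proof (Rmin_r delta0 eps : delta <= eps); rewrite (d_sym _ xm) in *.
  unfold eps in *; lra.
Qed.

Lemma B_shift_periods i k x : B (i + k * N) x -> B i x.
Proof.
  induction k as [|k IHk]; simpl; intro x_in.
  - rewrite Nat.add_0_r in x_in; exact x_in.
  - apply IHk, B_periodic; replace (i + k * N + N)%nat with (i + (N + k * N))%nat by lia.
    exact x_in.
Qed.

Lemma orbit_limit_in_family (B_closed : forall i, metric_closed d (B i)) x l :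
  B 0 x -> seq_converges_to d (fun n => iter_map T n x) l -> forall j, B j l.
Proof.
  intros x_in x_lim j.
  apply (metric_closed_limit d (B j) _ l d_sym (B_closed j) x_lim).
  intro K; exists (j + K * N)%nat; split; [nia|].
  apply (B_shift_periods j K), (iter_map_family 0), x_in.
Qed.

Lemma orbit_limit_fixed i x l : B i x -> (forall j, B j l) ->
  seq_converges_to d (fun n => iter_map T n x) l -> T l = l.
Proof.
  intros x_in l_in x_lim; symmetry; apply d_eq0.
  destruct (Rle_lt_dec (d l (T l)) 0) as [dl_le0 | dl_gt0].
  { pose proof (d_ge0 l (T l)); lra. }
  exfalso; destruct (x_lim (d l (T l) / 2)) as [K HK]; [lra|].
  pose proof (HK K (le_n K)); pose proof (HK (S K) (le_S _ _ (le_n K))); simpl in *.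
  pose proof (dist_T_le (i + K) _ _ (iter_map_family i x K x_in) (l_in (S (i + K)))).
  pose proof (d_triangle l (T (iter_map T K x)) (T l)).
  rewrite (d_sym l (T (iter_map T K x))) in *; lra.
Qed.

Lemma fixed_point_unique i z l : B i z -> (forall j, B j l) -> T z = z -> T l = l -> z = l.
Proof.
  intros z_in l_in z_fixed l_fixed; apply NNPP; intro z_neq_l.
  pose proof (dist_T_lt i z l z_in (l_in (S i)) z_neq_l).
  rewrite z_fixed, l_fixed in *; lra.
Qed.

Lemma orbit_converges_to_fixed i x l : B i x -> (forall j, B j l) -> T l = l ->
  seq_converges_to d (fun n => iter_map T n x) l.
Proof.
  intros x_in l_in l_fixed eps eps_gt0.
  apply (meir_keeler_seq_vanishes (fun n => d (iter_map T n x) l)); [| | | exact eps_gt0].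
  - intro; apply d_ge0.
  - intro n; simpl; rewrite <- l_fixed at 1.
    apply (dist_T_le (i + n)); [apply iter_map_family, x_in | apply l_in].
  - intros eps' eps'_gt0; destruct (T_meir_keeler eps' eps'_gt0) as [delta [delta_gt0 Hdelta]].
    exists delta; split; [exact delta_gt0|]; intro n; simpl.
    replace (d (T (iter_map T n x)) l) with (d (T (iter_map T n x)) (T l)) by congruence.
    apply (Hdelta (i + n)%nat); [apply iter_map_family, x_in | apply l_in].
Qed.

Theorem cyclic_meir_keeler_fixed_point
  (d_complete : complete_metric d) (B_closed : forall i, metric_closed d (B i)) x0 :
  B 0 x0 -> exists l, (forall i, B i l) /\ T l = l /\
    (forall i z, B i z -> T z = z -> z = l) /\
    (forall i x, B i x -> seq_converges_to d (fun n => iter_map T n x) l).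
Proof.
  intro x0_in.
  destruct (d_complete _ (orbit_cauchy 0 x0 x0_in)) as [l x0_lim].
  pose proof (orbit_limit_in_family B_closed x0 l x0_in x0_lim) as l_in.
  pose proof (orbit_limit_fixed 0 x0 l x0_in l_in x0_lim) as l_fixed.
  exists l; split; [exact l_in|]; split; [exact l_fixed|]; split.
  - intros i z z_in z_fixed; exact (fixed_point_unique i z l z_in l_in z_fixed l_fixed).
  - intros i x x_in; exact (orbit_converges_to_fixed i x l x_in l_in l_fixed).
Qed.

End CyclicMeirKeeler.

Theorem corollary7 (X : Type) (d : X -> X -> R) (N : nat) (A : nat -> X -> Prop)
  (T : X -> X)
  (Hd : is_metric d) (Hcomp : complete_metric d) (HN : (1 <= N)%nat)
  (Hne : forall i, (i < N)%nat -> exists x, A i x)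
  (Hcl : forall i, (i < N)%nat -> metric_closed d (A i))
  (F1 : forall i, (i < N)%nat -> forall x, A i x -> A (S i mod N)%nat (T x))
  (F3 : forall eps, 0 < eps -> exists delta, 0 < delta /\
          forall i, (i < N)%nat -> forall x y, A i x -> A (S i mod N)%nat y ->
            eps <= d x y -> d x y < eps + delta -> d (T x) (T y) < eps) :
  (exists x, forall i, (i < N)%nat -> A i x) /\
  exists xs,
    (forall i, (i < N)%nat -> A i xs) /\ T xs = xs /\
    (forall z, (exists i, (i < N)%nat /\ A i z) -> T z = z -> z = xs) /\
    (forall x, (exists i, (i < N)%nat /\ A i x) ->
       seq_converges_to d (fun n => iter_map T n x) xs).
Proof.
  set (B := fun i => A (i mod N)).
  assert (mod_lt : forall i, (i mod N < N)%nat) by (intro; apply Nat.mod_upper_bound; lia).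
  assert (A_B : forall i x, (i < N)%nat -> A i x -> B i x).
  { intros i x i_lt x_in; unfold B; rewrite Nat.mod_small; assumption. }
  assert (B_periodic : forall i x, B (i + N)%nat x -> B i x).
  { intros i x; unfold B; replace (i + N)%nat with (i + 1 * N)%nat by lia.
    rewrite Nat.Div0.mod_add; auto. }
  assert (T_maps : forall i x, B i x -> B (S i) (T x)).
  { intros i x x_in; unfold B; rewrite <- succ_mod_idemp; apply F1; auto. }
  assert (T_meir_keeler : forall eps, 0 < eps -> exists delta, 0 < delta /\
            forall i x y, B i x -> B (S i) y ->
              eps <= d x y -> d x y < eps + delta -> d (T x) (T y) < eps).
  { intros eps eps_gt0; destruct (F3 eps eps_gt0) as [delta [delta_gt0 Hdelta]].
    exists delta; split; [exact delta_gt0|]; intros i x y x_in y_in.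
    apply (Hdelta (i mod N)); [apply mod_lt | exact x_in | rewrite succ_mod_idemp; exact y_in]. }
  destruct (Hne 0%nat ltac:(lia)) as [x0 x0_in].
  destruct (cyclic_meir_keeler_fixed_point X d T B N Hd HN B_periodic T_maps T_meir_keeler
              Hcomp (fun i => Hcl _ (mod_lt i)) x0 (A_B 0%nat x0 ltac:(lia) x0_in))
    as [xs [xs_in [xs_fixed [xs_unique xs_attracts]]]].
  assert (xs_inA : forall i, (i < N)%nat -> A i xs).
  { intros i i_lt; rewrite <- (Nat.mod_small i N i_lt); apply xs_in. }
  split; [exists xs; exact xs_inA|].
  exists xs; repeat split; [exact xs_inA | exact xs_fixed | |].
  - intros z [i [i_lt z_in]]; apply (xs_unique i), A_B; assumption.
  - intros x [i [i_lt x_in]]; apply (xs_attracts i), A_B; assumption.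
Qed.
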